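(* Let $G$ be a graph, $k$ a positive integer, and $V_1,\dots,V_t$ a partition of $V(G)$ into types as described in the context. If the integer program $\mathrm{ILP}(G,k,V_1,\dots,V_t)$ described in the context has a feasible assignment, then $G$ has a star coloring using at most $k$ colors.
   Context: All graphs are finite, simple, undirected and connected. A star coloring of $G$ with at most $k$ colors is a map $f:V(G)\to\{1,\dots,k\}$ with $f(u)\neq f(v)$ for every edge $uv$ such that every path on four vertices (not necessarily induced) receives at least three distinct colors. Two vertices $u,v$ have the same type if $N(u)\setminus\{v\}=N(v)\setminus\{u\}$; $V_1,\dots,V_t$ is a partition of $V(G)$ into nonempty sets in each of which all vertices pairwise have the same type. Then each $G[V_i]$ is a clique or an independent set; $V_i$ is called a clique type if $G[V_i]$ is complete and an independent type if $G[V_i]$ has no edges. For $i\neq j$, either every vertex of $V_i$ is adjacent to every vertex of $V_j$ (write $V_j\in adj(V_i)$) or there are no edges between them. For $A\subseteq[t]$ let $T_A=\{V_i: i\in A\}$. The program $\mathrm{ILP}(G,k,V_1,\dots,V_t)$ has one integer variable $n_A$ for every $A\subseteq[t]$ and the following constraints: (C0) $n_A=0$ (the variable is discarded) whenever $T_A$ contains two types $V_i,V_j$ with $V_j\in adj(V_i)$; (C1) $\sum_{A\subseteq[t]} n_A\le k$; (C2) for each clique type $V_i$: $\sum_{A: V_i\in T_A} n_A=|V_i|$; (C3) for each independent type $V_i$: $1\le \sum_{A:V_i\in T_A} n_A\le \min\{k,|V_i|\}$; (C4) for every four distinct types $V_{i_1},V_{i_2},V_{i_3},V_{i_4}$ with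 $V_{i_1},V_{i_3}\in adj(V_{i_2})$ and $V_{i_4}\in adj(V_{i_3})$: if $\sum_{A: V_{i_1},V_{i_3}\in T_A} n_A\ge 1$ then $\sum_{B: V_{i_2},V_{i_4}\in T_B} n_B=0$; (C5) for every three distinct types $V_{i_1},V_{i_2},V_{i_3}$ with $V_{i_1}$ an independent type and $V_{i_2},V_{i_3}\in adj(V_{i_1})$: if $\sum_{A:V_{i_1}\in T_A} n_A<|V_{i_1}|$ then $\sum_{B: V_{i_2},V_{i_3}\in T_B} n_B=0$; (C6) for every two distinct independent types $V_{i_1},V_{i_2}$ with $V_{i_1}\in adj(V_{i_2})$: if $\sum_{A:V_{i_1}\in T_A} n_A<|V_{i_1}|$ then $\sum_{B:V_{i_2}\in T_B} n_B=|V_{i_2}|$, and symmetrically with $i_1,i_2$ swapped; (C7) $n_A\ge 0$ for all $A\subseteq[t]$. A feasible assignment is an assignment of integer values to all $n_A$ satisfying (C0)–(C7). *)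

From mathcomp Require Import all_boot all_order all_algebra.
Set Implicit Arguments. Unset Strict Implicit. Unset Printing Implicit Defensive.
Import GRing.Theory Num.Theory.

Section Defs.
Variable T : finType.

Definition simple_graph (e : rel T) : Prop :=
  symmetric e /\ irreflexive e.

Definition connected_graph (e : rel T) : Prop :=
  forall u v : T, connect e u v.

Definition star_coloring (e : rel T) (k : nat) (f : T -> 'I_k) : Prop :=
  (forall u v, e u v -> f u != f v) /\
  (forall a b c d : T, uniq [:: a; b; c; d] -> e a b -> e b c -> e c d ->
     3 <= #|[set f a; f b; f c; f d]|).

Definition same_type (e : rel T) (u v : T) : Prop :=
  [set w | e u w] :\ v = [set w | e v w] :\ u.

Variable (e : rel T) (t : nat) (p : T -> 'I_t).

Definition part (i : 'I_t) : {set T} := [set x | p x == i].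

Definition type_partition : Prop :=
  (forall i : 'I_t, exists x, p x = i) /\
  (forall u v, p u = p v -> same_type e u v).

Definition tadj (i j : 'I_t) : bool :=
  (i != j) && [exists u, exists v, [&& p u == i, p v == j & e u v]].

Definition clique_type (i : 'I_t) : Prop :=
  forall u v, p u = i -> p v = i -> u != v -> e u v.

Definition indep_type (i : 'I_t) : Prop :=
  forall u v, p u = i -> p v = i -> ~~ e u v.

Local Open Scope ring_scope.

Definition sumA (n : {set 'I_t} -> int) (S : {set 'I_t}) : int :=
  \sum_(A : {set 'I_t} | S \subset A) n A.

Definition ILP_feasible (k : nat) (n : {set 'I_t} -> int) : Prop :=
  (forall A : {set 'I_t}, forall i j, i \in A -> j \in A -> tadj i j -> n A = 0) /\
  (\sum_(A : {set 'I_t}) n A <= k%:Z) /\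
  (forall i, clique_type i -> sumA n [set i] = #|part i|%:Z) /\
  (forall i, indep_type i ->
     1 <= sumA n [set i] /\ sumA n [set i] <= (minn k #|part i|)%:Z) /\
  (forall i1 i2 i3 i4 : 'I_t, uniq [:: i1; i2; i3; i4] ->
     tadj i2 i1 -> tadj i2 i3 -> tadj i3 i4 ->
     1 <= sumA n [set i1; i3] -> sumA n [set i2; i4] = 0) /\
  (forall i1 i2 i3 : 'I_t, uniq [:: i1; i2; i3] -> indep_type i1 ->
     tadj i1 i2 -> tadj i1 i3 ->
     sumA n [set i1] < #|part i1|%:Z -> sumA n [set i2; i3] = 0) /\
  (* C6 (both orientations, since i1 i2 range over all ordered pairs) *)
  (forall i1 i2 : 'I_t, i1 != i2 -> indep_type i1 -> indep_type i2 ->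
     tadj i2 i1 ->
     sumA n [set i1] < #|part i1|%:Z -> sumA n [set i2] = #|part i2|%:Z) /\
  (forall A, 0 <= n A).

End Defs.

From mathcomp Require Import all_boot all_order all_algebra.
Import Order.POrderTheory GRing.Theory Num.Theory.
Set Implicit Arguments. Unset Strict Implicit. Unset Printing Implicit Defensive.

(* Colour with the pairs (A, j), j < n_A: the n_A colours counted by n_A are
   shared by the types in T_A, so a type V_i has sumA n {i} colours available and
   injects its vertices into them whenever there are enough, which by (C2) is the
   case for clique types.  Two vertices share a colour only if some A contains
   both their types, which by (C0) are then not adjacent; a colour repeated
   inside one type forces that type to be independent and short of colours.  A
   bicoloured path a-b-c-d is then excluded by (C6) when both repetitions stay
   inside a type, by (C5) when exactly one does, and by (C4) when a, b, c, d lie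
   in four distinct types.  By (C1) at most k colours are used. *)

Lemma card_setX_ord_lt (I : finType) (K : nat) (m : I -> nat) (P : pred I) :
  (forall i, m i <= K) ->
  #|[set x : I * 'I_K | P x.1 && (x.2 < m x.1)]| = \sum_(i | P i) m i.
Proof.
move=> m_le_K; rewrite -sum1_card.
rewrite (eq_bigl (fun x : I * 'I_K => P x.1 && (x.2 < m x.1))); last first.
  by move=> x; rewrite inE.
rewrite -(pair_big_dep P (fun i (j : 'I_K) => j < m i) (fun _ _ => 1)) /=.
apply: eq_bigr => i _.
by rewrite (big_ord_narrow_cond (P := xpredT) (m_le_K i)) /= sum1_card card_ord.
Qed.

Lemma card_set3_ge3 (X : finType) (S : {set X}) x y z :
  x \in S -> y \in S -> z \in S -> x != y -> y != z -> x != z -> 3 <= #|S|.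
Proof.
move=> xS yS zS xy yz xz.
have -> : 3 = #|[set x; y; z]|.
  by rewrite setUC cardsU1 cards2 !inE negb_or xy eq_sym xz eq_sym yz.
apply: subset_leq_card; apply/subsetP => w.
by rewrite !inE -orbA => /or3P[]/eqP->.
Qed.

Lemma card_set4_ge3 (X : finType) (a b c d : X) :
  a != b -> b != c -> c != d -> ~ (a = c /\ b = d) -> 3 <= #|[set a; b; c; d]|.
Proof.
move=> ab bc cd not_ac_bd; have [ac | ac] := eqVneq a c.
  have bd : b != d by apply/eqP => bd; apply: not_ac_bd.
  by apply: (@card_set3_ge3 _ _ b c d); rewrite ?inE ?eqxx ?orbT.
by apply: (@card_set3_ge3 _ _ a b c); rewrite ?inE ?eqxx ?orbT.
Qed.

(* The index is reduced modulo #|C| so that the value lies in C even when V is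
   larger than C. *)
Definition set_embed (X Y : finType) (V : {set X}) (C : {set Y}) (d : Y) (v : X) :=
  nth d (enum C) (index v (enum V) %% #|C|).

Lemma set_embed_in (X Y : finType) (V : {set X}) (C : {set Y}) d v :
  0 < #|C| -> set_embed V C d v \in C.
Proof. by move=> C_gt0; rewrite -mem_enum mem_nth // -cardE ltn_pmod. Qed.

Lemma set_embed_inj (X Y : finType) (V : {set X}) (C : {set Y}) d :
  #|V| <= #|C| -> {in V &, injective (set_embed V C d)}.
Proof.
move=> VC u v uV vV.
have index_lt w : w \in V -> index w (enum V) < #|C|.
  by move=> wV; apply: leq_trans VC; rewrite cardE index_mem mem_enum.
rewrite /set_embed !modn_small ?index_lt // => /eqP.
rewrite nth_uniq ?enum_uniq -?cardE ?index_lt // => /eqP.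
by apply: index_inj; rewrite ?mem_enum.
Qed.

Lemma relabel_ord (X Y : finType) (S : {set Y}) (k : nat) (g : X -> Y) :
  0 < k -> #|S| <= k -> (forall v, g v \in S) ->
  exists f : X -> 'I_k, forall u v, (f u == f v) = (g u == g v).
Proof.
case: k => // k _ Sk gS; exists (fun v => inord (index (g v) (enum S))) => u v.
have index_lt w : index (g w) (enum S) < k.+1.
  by apply: leq_trans Sk; rewrite cardE index_mem mem_enum.
rewrite -val_eqE /= !inordK //; apply/eqP/eqP => [|-> //].
by move/(congr1 (nth (g u) (enum S))); rewrite !nth_index ?mem_enum.
Qed.

Section Graph.
Variables (T : finType) (e : rel T).

Lemma star_coloringW (k : nat) (f : T -> 'I_k) :
  (forall u v, e u v -> f u != f v) ->
  (forall a b c d, uniq [:: a; b; c; d] -> e a b -> e b c -> e c d ->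
     f a = f c -> f b = f d -> False) ->
  star_coloring e f.
Proof.
move=> proper no_bicoloured; split=> // a b c d abcd eab ebc ecd.
apply: card_set4_ge3; rewrite ?proper //.
by case; apply: no_bicoloured.
Qed.

Variables (t : nat) (p : T -> 'I_t).

Lemma tadj_edge u v : e u v -> p u != p v -> tadj e p (p u) (p v).
Proof.
move=> euv puv; rewrite /tadj puv /=.
by apply/existsP; exists u; apply/existsP; exists v; rewrite !eqxx euv.
Qed.

Lemma indep_type_edge u v : indep_type e p (p u) -> e u v -> p u != p v.
Proof.
by move=> ind euv; apply/eqP => puv; have := ind u v erefl (esym puv); rewrite euv.
Qed.

(* A type containing one edge is a clique: same-type vertices share their
   neighbours outside themselves. *)
Lemma clique_or_indep_type :
  simple_graph e -> (forall u v, p u = p v -> same_type e u v) ->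
  forall i, clique_type e p i \/ indep_type e p i.
Proof.
move=> [e_sym _] p_same i.
have shared_nbr a b c : e a b -> p a = p c -> c != b -> e c b.
  move=> eab pac cb; have /setP/(_ b) := p_same a c pac.
  by rewrite !inE eq_sym (negbTE cb) eab /= => /esym /andP[].
have [/existsP[u0 /existsP[v0 /and3P[/eqP pu0 /eqP pv0 euv0]]] | no_edge] :=
  boolP [exists u, exists v, [&& p u == i, p v == i & e u v]]; last first.
  right => u v pu pv; apply/negP => euv.
  by move/existsPn/(_ u)/existsPn/(_ v): no_edge; rewrite pu pv euv !eqxx.
have adj_v0 x : p x = i -> x != v0 -> e x v0.
  by move=> px; apply: shared_nbr euv0 _; rewrite pu0 px.
left => x y px py; have [-> v0y | xv0 xy] := eqVneq x v0.
  by rewrite e_sym adj_v0 // eq_sym.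
have [-> | yv0] := eqVneq y v0; first exact: adj_v0.
rewrite e_sym; apply: (shared_nbr v0); first by rewrite e_sym adj_v0.
  by rewrite pv0 py.
by rewrite eq_sym.
Qed.

End Graph.

Section ILPColouring.
Local Open Scope ring_scope.

Variables (T : finType) (e : rel T) (t k : nat) (p : T -> 'I_t).
Variable n : {set 'I_t} -> int.
Hypotheses (e_simple : simple_graph e) (p_types : type_partition e p).
Hypotheses (n_feasible : ILP_feasible e p k n) (k_gt0 : (0 < k)%N).

Let m A := `|n A|%N.

Lemma nE A : n A = (m A)%:Z.
Proof. by have [_ [_ [_ [_ [_ [_ [_ n_ge0]]]]]]] := n_feasible; rewrite gez0_abs. Qed.

Lemma m_le_k A : (m A <= k)%N.
Proof.
have [_ [sum_le_k _]] := n_feasible.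
have sum_m_le_k : (\sum_A m A <= k)%N.
  by rewrite -lez_nat -natz natr_sum; under eq_bigr => B _ do rewrite natz -nE.
by apply: leq_trans sum_m_le_k; rewrite (bigD1 A) //= leq_addr.
Qed.

Definition palette (S : {set 'I_t}) :=
  [set x : {set 'I_t} * 'I_k | (S \subset x.1) && (x.2 < m x.1)%N].

Lemma card_palette S : #|palette S|%:Z = sumA n S.
Proof.
rewrite (card_setX_ord_lt (fun A : {set 'I_t} => S \subset A)); last exact: m_le_k.
by rewrite /sumA -natz natr_sum; apply: eq_bigr => A _; rewrite natz -nE.
Qed.

Lemma paletteU S1 S2 : palette (S1 :|: S2) = palette S1 :&: palette S2.
Proof. by apply/setP => x; rewrite !inE subUset andbACA andbb. Qed.

Lemma card_palette0 : (#|palette set0| <= k)%N.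
Proof.
have [_ [sum_le_k _]] := n_feasible.
rewrite -lez_nat card_palette /sumA; apply: le_trans sum_le_k.
by rewrite (eq_bigl xpredT) // => A; rewrite sub0set.
Qed.

Lemma palette_type_gt0 i : (0 < #|palette [set i]|)%N.
Proof.
have [_ [_ [C2 [C3 _]]]] := n_feasible.
have [[_ p_same] [x px]] := (p_types, p_types.1 i).
have x_part : x \in part p i by rewrite inE px.
have [/C2 | /C3 [sumA_ge1 _]] := clique_or_indep_type e_simple p_same i.
  by rewrite -card_palette => -[->]; apply/card_gt0P; exists x.
by rewrite -card_palette lez_nat in sumA_ge1.
Qed.

Definition colour v :=
  set_embed (part p (p v)) (palette [set p v]) (set0, Ordinal k_gt0) v.

Lemma colour_in v : colour v \in palette [set p v].
Proof. exact/set_embed_in/palette_type_gt0. Qed.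

Lemma colour_in0 v : colour v \in palette set0.
Proof. by have := colour_in v; rewrite !inE sub0set => /andP[_ ->]. Qed.

Lemma colour_eq_pair u v : colour u = colour v -> colour u \in palette [set p u; p v].
Proof. by move=> uv; rewrite paletteU inE colour_in uv colour_in. Qed.

Lemma colour_eq_not_tadj u v : colour u = colour v -> ~~ tadj e p (p u) (p v).
Proof.
have [C0 _] := n_feasible.
move=> /colour_eq_pair; rewrite inE subUset !sub1set => /andP[/andP[pu pv] m_pos].
by apply/negP => /(C0 _ _ _ pu pv); rewrite nE => -[m0]; rewrite m0 in m_pos.
Qed.

Lemma colour_eq_sumA u v : colour u = colour v -> 1 <= sumA n [set p u; p v].
Proof.
move=> /colour_eq_pair uv.
by rewrite -card_palette lez_nat; apply/card_gt0P; exists (colour u).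
Qed.

Lemma colour_eq_same_type u v : colour u = colour v -> u != v -> p u = p v ->
  indep_type e p (p u) /\ sumA n [set p u] < #|part p (p u)|%:Z.
Proof.
have [_ [_ [C2 _]]] := n_feasible.
move=> uv u_neq_v puv.
have few_colours : (#|palette [set p u]| < #|part p (p u)|)%N.
  rewrite ltnNge; apply: contra u_neq_v => enough_colours; apply/eqP.
  by move: uv; rewrite /colour -puv; apply: set_embed_inj => //; rewrite inE puv.
split; last by rewrite -card_palette ltz_nat.
have [|//] := clique_or_indep_type e_simple p_types.2 (p u).
by move/C2; rewrite -card_palette => -[clique_eq]; rewrite clique_eq ltnn in few_colours.
Qed.

Lemma colour_eq_type_neq a b c :
  colour a = colour c -> p a != p c -> e b c -> p a != p b.
Proof.
move=> ac pac ebc; apply/eqP => pab.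
by have := colour_eq_not_tadj ac; rewrite pab tadj_edge // -pab.
Qed.

Lemma colour_proper u v : e u v -> colour u != colour v.
Proof.
have [e_sym e_irr] := e_simple.
move=> euv; apply/eqP => uv; have [puv | puv] := eqVneq (p u) (p v).
  have u_neq_v : u != v by apply: contraTneq euv => ->; rewrite e_irr.
  have [u_indep _] := colour_eq_same_type uv u_neq_v puv.
  by have := indep_type_edge u_indep euv; rewrite puv eqxx.
by have := colour_eq_not_tadj uv; rewrite tadj_edge.
Qed.

Lemma colour_deficient_no_bicoloured x y z w :
  colour x = colour z -> x != z -> p x = p z -> e x y -> e z w ->
  colour y = colour w -> p y != p w -> False.
Proof.
have [_ [_ [_ [_ [_ [C5 _]]]]]] := n_feasible.
move=> xz x_neq_z pxz exy ezw yw pyw.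
have [x_indep x_few] := colour_eq_same_type xz x_neq_z pxz.
have pxy := indep_type_edge x_indep exy.
have pzw : p z != p w by apply: indep_type_edge ezw; rewrite -pxz.
have types_uniq : uniq [:: p x; p y; p w].
  by rewrite /= !inE negb_or pxy pxz pzw pyw.
have tadj_xw : tadj e p (p x) (p w) by rewrite pxz tadj_edge.
have sum0 := C5 _ _ _ types_uniq x_indep (tadj_edge exy pxy) tadj_xw x_few.
by have := colour_eq_sumA yw; rewrite sum0.
Qed.

Lemma colour_no_bicoloured_P4 a b c d : uniq [:: a; b; c; d] ->
  e a b -> e b c -> e c d -> colour a = colour c -> colour b = colour d -> False.
Proof.
have [e_sym _] := e_simple.
have [_ [_ [_ [_ [C4 [_ [C6 _]]]]]]] := n_feasible.
rewrite /= !inE !negb_or => /and4P[/and3P[_ ac _] /andP[_ bd] _ _].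
move=> eab ebc ecd ac_col bd_col.
have [eba ecb edc] : [/\ e b a, e c b & e d c] by split; rewrite e_sym.
have [pac | pac] := eqVneq (p a) (p c); have [pbd | pbd] := eqVneq (p b) (p d).
- have [a_indep a_few] := colour_eq_same_type ac_col ac pac.
  have [b_indep b_few] := colour_eq_same_type bd_col bd pbd.
  have pab := indep_type_edge a_indep eab.
  have pba : p b != p a by rewrite eq_sym.
  have b_full := C6 _ _ pab a_indep b_indep (tadj_edge eba pba) a_few.
  by rewrite b_full ltxx in b_few.
- exact: colour_deficient_no_bicoloured ac_col ac pac eab ecd bd_col pbd.
- exact: colour_deficient_no_bicoloured bd_col bd pbd eba edc ac_col pac.
have pca : p c != p a by rewrite eq_sym.
have pdb : p d != p b by rewrite eq_sym.
have pab := colour_eq_type_neq ac_col pac ebc.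
have pcb := colour_eq_type_neq (esym ac_col) pca eba.
have pdc := colour_eq_type_neq (esym bd_col) pdb ecb.
have pda := colour_eq_type_neq (esym bd_col) pdb eab.
have types_uniq : uniq [:: p a; p b; p c; p d].
  by rewrite /= !inE !negb_or pab pac eq_sym pda eq_sym pcb pbd eq_sym pdc.
have tadj_ba : tadj e p (p b) (p a) by rewrite tadj_edge // eq_sym.
have tadj_bc : tadj e p (p b) (p c) by rewrite tadj_edge // eq_sym.
have tadj_cd : tadj e p (p c) (p d) by rewrite tadj_edge // eq_sym.
have sum0 := C4 _ _ _ _ types_uniq tadj_ba tadj_bc tadj_cd (colour_eq_sumA ac_col).
by have := colour_eq_sumA bd_col; rewrite sum0.
Qed.

End ILPColouring.

Theorem lemma1 (T : finType) (e : rel T) (k t : nat) (p : T -> 'I_t) :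
  simple_graph e -> connected_graph e -> (0 < k)%N ->
  type_partition e p ->
  (exists n : {set 'I_t} -> int, ILP_feasible e p k n) ->
  exists f : T -> 'I_k, star_coloring e f.
Proof.
move=> e_simple _ k_gt0 p_types [n n_feasible].
have [f f_colour] := relabel_ord k_gt0 (card_palette0 n_feasible)
  (colour_in0 e_simple p_types n_feasible k_gt0).
exists f; apply: star_coloringW => [u v euv | a b c d abcd eab ebc ecd].
  by rewrite f_colour (colour_proper e_simple p_types n_feasible).
move=> /eqP; rewrite f_colour => /eqP ac /eqP; rewrite f_colour => /eqP bd.
exact: (colour_no_bicoloured_P4 e_simple p_types n_feasible abcd eab ebc ecd ac bd).
Qed.
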